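(* Let $b_{10}>0$, $b_{11}\ge0$, $c_{01}\ge0$, $c_{11}\ge0$, and define $\gamma'=\frac{c_{01}}{b_{10}}$, $\delta'=\frac{b_{10}-b_{11}+c_{11}-c_{01}}{b_{10}}$. Let $\mathcal{F}=\{(P_{11},t): P_{11}\in[0,1],\ P_{11}-1\le t\le P_{11}\}$ and $\mathcal{P}=\{(P_{11},t)\in\mathcal{F}: t>\gamma'+\delta'P_{11}\}$. Then $\mathcal{P}\neq\emptyset$ if and only if $c_{11}<b_{11}$.
   Context: Double binary causal classification: $P_{11}$ is the probability of the positive outcome under the positive treatment, $t=P_{11}-P_{10}$ the estimated individual treatment effect, $b_{ij}$ the benefit of outcome $i$ under treatment $j$ and $c_{ij}$ the cost of outcome $i$ under treatment $j$, normalized so that $c_{00}=c_{10}=0$, $b_{00}=b_{01}=0$. The cost-sensitive causal decision boundary (equality of expected profits of the two treatments) is then $t=\gamma'+\delta'P_{11}$, and $\mathcal{P}$ is the positive treatment set. *)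

From Stdlib Require Import Reals.
Open Scope R_scope.

Definition gamma' (b10 c01 : R) : R := c01 / b10.

Definition delta' (b10 b11 c01 c11 : R) : R := (b10 - b11 + c11 - c01) / b10.

Definition feasible (p11 t : R) : Prop :=
  0 <= p11 <= 1 /\ p11 - 1 <= t <= p11.

Definition pos_treat (b10 b11 c01 c11 : R) (p11 t : R) : Prop :=
  feasible p11 t /\ t > gamma' b10 c01 + delta' b10 b11 c01 c11 * p11.

From Stdlib Require Import Reals Lra Psatz.
Open Scope R_scope.

(* Clearing the denominator [b10], a point lies above the decision boundary iff
   [c01 + (b10 - b11 + c11 - c01) P11 < b10 t].  Since [t <= P11], this forces
   [c01 (1 - P11) < (b11 - c11) P11], impossible unless [c11 < b11] because the
   left side is nonnegative; conversely, when [c11 < b11] the corner [(1, 1)] of the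
   feasible set is above the boundary. *)

Section DecisionBoundary.

Variables b10 b11 c01 c11 : R.
Hypothesis hb10 : 0 < b10.

Lemma decision_boundary_scaled (p11 : R) :
  (gamma' b10 c01 + delta' b10 b11 c01 c11 * p11) * b10
  = c01 + (b10 - b11 + c11 - c01) * p11.
Proof. unfold gamma', delta'; field; lra. Qed.

Lemma pos_treat_scaled (p11 t : R) :
  pos_treat b10 b11 c01 c11 p11 t <->
  feasible p11 t /\ c01 + (b10 - b11 + c11 - c01) * p11 < t * b10.
Proof.
  unfold pos_treat; rewrite <- decision_boundary_scaled.
  split; intros [hF hlt]; split; trivial.
  - apply Rmult_lt_compat_r; lra.
  - apply Rlt_gt, (Rmult_lt_reg_r b10); lra.
Qed.

Lemma pos_treat_cost_lt_benefit (p11 t : R) :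
  0 <= c01 -> pos_treat b10 b11 c01 c11 p11 t -> c11 < b11.
Proof.
  intros hc01 hP.
  apply pos_treat_scaled in hP as [[[hp0 hp1] [_ ht]] hlt].
  nra.
Qed.

Lemma pos_treat_corner : c11 < b11 -> pos_treat b10 b11 c01 c11 1 1.
Proof.
  intro hlt; apply pos_treat_scaled.
  split; [unfold feasible | ]; lra.
Qed.

End DecisionBoundary.

Theorem theorem2 (b10 b11 c01 c11 : R)
  (hb10 : 0 < b10) (hb11 : 0 <= b11) (hc01 : 0 <= c01) (hc11 : 0 <= c11) :
  (exists p11 t : R, pos_treat b10 b11 c01 c11 p11 t) <-> c11 < b11.
Proof.
  split.
  - intros [p11 [t hP]]; exact (pos_treat_cost_lt_benefit b10 b11 c01 c11 hb10 p11 t hc01 hP).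
  - intro hlt; exists 1, 1; now apply pos_treat_corner.
Qed.
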